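(* Let $r$ be a positive integer, let $A$ be a cubic graph of order $4r$, let $a$ be a vertex of $A$, and let $A^-=A-a$. If $A^-$ is an induced subgraph of a cubic graph $H$, then any $2$-conversion set of $H$ contains at least $r$ vertices of $A^-$.
   Context: For a graph $H=(V,E)$ and $S_0\subseteq V$, the irreversible $2$-threshold conversion process sets, for $t=1,2,\dots$, $S_t=S_{t-1}\cup\{v: v \text{ has at least } 2 \text{ neighbours in } S_{t-1}\}$; $S_0$ is a $2$-conversion set of $H$ if $S_t=V$ for some $t\ge 0$. *)

From mathcomp Require Import all_boot.
Set Implicit Arguments. Unset Strict Implicit. Unset Printing Implicit Defensive.

Definition simple_graph (T : finType) (e : rel T) : Prop :=
  symmetric e /\ irreflexive e.

Definition cubic (T : finType) (e : rel T) : Prop :=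
  simple_graph e /\ forall v : T, #|[set u | e v u]| = 3.

Definition conv_step (T : finType) (e : rel T) (S : {set T}) : {set T} :=
  S :|: [set v | 2 <= #|[set u in S | e v u]|].

Definition conversion_set2 (T : finType) (e : rel T) (S0 : {set T}) : Prop :=
  exists t : nat, iter t (conv_step e) S0 = [set: T].

Definition induced_embedding_minus (TA TH : finType) (eA : rel TA) (eH : rel TH)
  (a : TA) (f : TA -> TH) : Prop :=
  {in [pred x | x != a] &, injective f} /\
  forall x y, x != a -> y != a -> eH (f x) (f y) = eA x y.

(** Give every vertex of H its activation time.  A non-seed has at least two
    neighbours activated strictly earlier, hence, having degree 3, at most one
    neighbour activated no earlier.  In the copy of A - a (4r - 1 vertices,
    6r - 3 edges, s seeds) sum the degrees: a seed contributes at most 3, a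
    non-seed at most one more than its number of strictly earlier neighbours,
    and these numbers add up to the number of edges whose endpoints have
    different times.  Thus 2(6r - 3) <= 3s + (6r - 3) + (4r - 1 - s), i.e.
    6r - 3 <= 4r - 1 + 2s, and the last non-seed to be activated, which has no
    later neighbour, makes this strict.  Hence s >= r. *)

From mathcomp Require Import all_boot zify.
Set Implicit Arguments.
Unset Strict Implicit.
Unset Printing Implicit Defensive.

Lemma card_set_in_sum (T : finType) (A : {set T}) (P : pred T) :
  #|[set y in A | P y]| = \sum_(y in A) P y.
Proof.
rewrite -sum1_card [LHS]big_mkcond [RHS]big_mkcond /=.
by apply: eq_bigr => y _; rewrite inE; case: (y \in A); case: (P y).
Qed.

Lemma card_set_split (T : finType) (Q P : pred T) :
  #|[set y | Q y]| = #|[set y | Q y && P y]| + #|[set y | Q y && ~~ P y]|.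
Proof.
rewrite -(cardsID [set y | P y] [set y | Q y]); congr (_ + _);
  by apply: eq_card => y; rewrite !inE // andbC.
Qed.

Lemma card_setI_imset (aT rT : finType) (f : aT -> rT)
    (A : {set aT}) (B : {set rT}) :
  {in A &, injective f} -> #|B :&: f @: A| = #|A :&: f @^-1: B|.
Proof.
move=> f_inj; rewrite -(card_in_imset (f := f)); last first.
  by apply: sub_in2 f_inj => x /setIP [].
apply: eq_card => u; rewrite inE; apply/andP/imsetP.
  by case=> uB /imsetP [x xA ux]; exists x; rewrite // inE xA inE -ux.
by case=> x /setIP [xA]; rewrite inE => xB ->; rewrite xB imset_f.
Qed.

Lemma leq_card_nbrs_embed (aT rT : finType) (eA : rel aT) (eH : rel rT)
    (X : {set aT}) (f : aT -> rT) (P : pred rT) x :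
  {in X &, injective f} -> {in X &, forall x y, eH (f x) (f y) = eA x y} ->
  x \in X ->
  #|[set y in X | eA x y && P (f y)]| <= #|[set u | eH (f x) u && P u]|.
Proof.
move=> f_inj f_ind xX.
rewrite -(card_in_imset (sub_in2 _ f_inj)); last by move=> y /setIdP [].
apply/subset_leq_card/subsetP => _ /imsetP [y /setIdP [yX /andP [xy Pfy]] ->].
by rewrite inE f_ind // xy.
Qed.

Section ActivationTime.

Variables (T : finType) (e : rel T) (S0 : {set T}).

Local Notation S_ k := (iter k (conv_step e) S0).

Lemma subset_iter_conv_step m n : m <= n -> S_ m \subset S_ n.
Proof.
move/subnK <-; elim: (n - m) => [|k IHk] //=.
exact: subset_trans IHk (subsetUl _ _).
Qed.

Hypothesis S0_conv : conversion_set2 e S0.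

Lemma eventually_converted w : exists k, w \in S_ k.
Proof. by have [t St] := S0_conv; exists t; rewrite St inE. Qed.

Definition act_time w := ex_minn (eventually_converted w).

Lemma mem_iter_conv_step w k : (w \in S_ k) = (act_time w <= k).
Proof.
rewrite /act_time; case: ex_minnP => m wm m_min.
apply/idP/idP => [/m_min // | le_mk].
exact: subsetP (subset_iter_conv_step le_mk) _ wm.
Qed.

Lemma act_time_eq0 w : (act_time w == 0) = (w \in S0).
Proof. by rewrite -leqn0 -(mem_iter_conv_step w 0). Qed.

Lemma card_earlier_nbrs_ge2 w :
  w \notin S0 -> 2 <= #|[set u | e w u && (act_time u < act_time w)]|.
Proof.
rewrite -act_time_eq0; case Ew: (act_time w) => [|k] // _.
have := mem_iter_conv_step w k.+1; rewrite Ew leqnn /= /conv_step in_setU.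
rewrite mem_iter_conv_step Ew ltnn /= inE => /leq_trans; apply.
apply/subset_leq_card/subsetP => u; rewrite !inE mem_iter_conv_step ltnS.
by rewrite andbC.
Qed.

Lemma card_later_nbrs_le1 w : #|[set u | e w u]| <= 3 -> w \notin S0 ->
  #|[set u | e w u && (act_time w <= act_time u)]| <= 1.
Proof.
move=> deg_w /card_earlier_nbrs_ge2.
rewrite (card_set_split (e w) (fun u => act_time u < act_time w)) in deg_w.
have -> : [set u | e w u && (act_time w <= act_time u)]
       = [set u | e w u && ~~ (act_time u < act_time w)].
  by apply/setP => u; rewrite !inE leqNgt.
lia.
Qed.

End ActivationTime.

Section TimedDegreeSum.

Variables (T : finType) (e : rel T) (X S : {set T}) (tau : T -> nat).

Hypothesis e_sym : symmetric e.
Hypothesis deg_le3 : {in X, forall x, #|[set y in X | e x y]| <= 3}.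
Hypothesis seed_time0 : {in S, forall x, tau x = 0}.
Hypothesis later_nbrs_le1 :
  {in X :\: S, forall x, #|[set y in X | e x y && (tau x <= tau y)]| <= 1}.

Let deg x := #|[set y in X | e x y]|.
Let earlier x := #|[set y in X | e x y && (tau y < tau x)]|.
Let later x := #|[set y in X | e x y && (tau x < tau y)]|.
Let tied x := #|[set y in X | e x y && (tau y == tau x)]|.

Lemma deg_split x : deg x = earlier x + later x + tied x.
Proof.
rewrite /deg /earlier /later /tied !card_set_in_sum -!big_split.
by apply: eq_bigr => y _ /=; case: (e x y); case: ltngtP.
Qed.

Lemma sum_earlier_later : \sum_(x in X) earlier x = \sum_(x in X) later x.
Proof.
rewrite /earlier /later (eq_bigr _ (fun x _ => card_set_in_sum _ _)).
rewrite exchange_big; apply: eq_bigr => x _; rewrite card_set_in_sum.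
by apply: eq_bigr => y _; rewrite e_sym.
Qed.

Lemma earlier_seed0 x : x \in S -> earlier x = 0.
Proof.
move=> /seed_time0 tx0; apply/eqP; rewrite cards_eq0; apply/eqP/setP => y.
by rewrite !inE tx0 ltn0 !andbF.
Qed.

Lemma deg_nonseed x : x \in X :\: S -> deg x <= earlier x + 1.
Proof.
move/later_nbrs_le1; rewrite deg_split -addnA leq_add2l; apply: leq_trans.
rewrite /later /tied !card_set_in_sum -big_split; apply: leq_sum => y _ /=.
by case: (e x y); case: ltngtP.
Qed.

Lemma last_nonseed : X :\: S != set0 -> exists2 z, z \in X :\: S & later z = 0.
Proof.
case/set0Pn => x0 x0U.
have [z zU z_max] := @arg_maxnP _ x0 (fun i => i \in X :\: S) tau x0U.
exists z => //; apply/eqP; rewrite cards_eq0; apply/eqP/setP => y; rewrite !inE.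
case: (boolP (y \in S)) => [/seed_time0 -> | yS]; first by rewrite ltn0 !andbF.
case: (boolP (y \in X)) => //= yX.
have : ~~ (tau z < tau y) by rewrite -leqNgt; apply: z_max; rewrite inE yS yX.
by move/negbTE ->; rewrite andbF.
Qed.

Lemma sum_deg_lt : X != set0 ->
  \sum_(x in X) #|[set y in X | e x y]| < 2 * #|X| + 4 * #|X :&: S|.
Proof.
move=> X0; change (\sum_(x in X) deg x < 2 * #|X| + 4 * #|X :&: S|).
rewrite -(cardsID S X).
have sum_deg :
    \sum_(x in X) deg x = 2 * \sum_(x in X) earlier x + \sum_(x in X) tied x.
  rewrite (eq_bigr _ (fun x _ => deg_split x)) !big_split /=.
  by rewrite -sum_earlier_later; lia.
have sum_earlier : \sum_(x in X) earlier x = \sum_(x in X :\: S) earlier x.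
  by rewrite (big_setID S) /= big1 // => x /setIP [_ /earlier_seed0].
have seed_part : \sum_(x in X :&: S) deg x <= 3 * #|X :&: S|.
  rewrite mulnC -sum_nat_const.
  by apply: leq_sum => x /setIP [xX _]; exact: deg_le3.
rewrite (big_setID S) /= in sum_deg *.
case: (eqVneq (X :\: S) set0) => [U0 | U0].
  have : 0 < #|X| by rewrite card_gt0.
  by rewrite -(cardsID S X) U0 big_set0 cards0; lia.
have [z zU later_z] := last_nonseed U0.
have nonseed_part : \sum_(x in X :\: S) deg x + (tied z == 0)
                    <= \sum_(x in X :\: S) earlier x + #|X :\: S|.
  rewrite -sum1_card -big_split !(big_setD1 z zU) /=.
  rewrite addnAC leq_add //; last first.
    by apply: leq_sum => x /setD1P [_ /deg_nonseed].
  have := deg_nonseed zU; rewrite deg_split later_z.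
  by case: eqVneq => [-> | _]; lia.
have tied_z : tied z <= \sum_(x in X) tied x.
  by rewrite (bigD1 z) ?leq_addr //; case/setDP: zU.
by case: (eqVneq (tied z) 0) nonseed_part => [_ | tz0] /=; lia.
Qed.

End TimedDegreeSum.

Lemma sum_deg_setC1 (T : finType) (e : rel T) (a : T) : cubic e ->
  \sum_(x in [set~ a]) #|[set y in [set~ a] | e x y]| + 6 = 3 * #|T|.
Proof.
move=> [[e_sym e_irr] deg3].
have deg_del x : #|[set y in [set~ a] | e x y]| + e x a = 3.
  rewrite -(deg3 x) [RHS](cardsD1 a) addnC inE; congr (_ + _).
  by apply: eq_card => y; rewrite !inE andbC.
have nbrs_a : \sum_(x in [set~ a]) e x a = 3.
  rewrite -card_set_in_sum -(deg3 a); apply: eq_card => x.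
  by rewrite !inE e_sym; case: eqP => // ->; rewrite e_irr.
have T_gt0 : 0 < #|T| by apply/card_gt0P; exists a.
have -> : 6 = \sum_(x in [set~ a]) e x a + 3 by rewrite nbrs_a.
rewrite addnA -big_split /= (eq_bigr _ (fun x _ => deg_del x)) sum_nat_const.
by rewrite cardsC1 -mulSnr prednK // mulnC.
Qed.

Theorem lemma5p15 (r : nat) (TA TH : finType) (eA : rel TA) (eH : rel TH)
  (a : TA) (f : TA -> TH) :
  0 < r ->
  cubic eA -> #|TA| = 4 * r ->
  cubic eH ->
  induced_embedding_minus eA eH a f ->
  forall S0 : {set TH}, conversion_set2 eH S0 ->
  r <= #|S0 :&: (f @: [set x | x != a])|.
Proof.
move=> r_gt0 cubicA cardA [_ degH] [f_inj f_ind] S0 S0_conv.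
have -> : [set x | x != a] = [set~ a] by apply/setP => x; rewrite !inE.
have f_injX : {in [set~ a] &, injective f}.
  by move=> x y; rewrite !in_setC1; exact: f_inj.
have f_indX : {in [set~ a] &, forall x y, eH (f x) (f y) = eA x y}.
  by move=> x y; rewrite !in_setC1; exact: f_ind.
pose tau x := act_time S0_conv (f x).
have deg_le3 x : x \in [set~ a] -> #|[set y in [set~ a] | eA x y]| <= 3.
  move=> _; rewrite -(cubicA.2 x); apply/subset_leq_card/subsetP => y.
  by rewrite !inE => /andP [].
have seed_time0 x : x \in f @^-1: S0 -> tau x = 0.
  by rewrite inE -(act_time_eq0 S0_conv) => /eqP.
have later_le1 x : x \in [set~ a] :\: f @^-1: S0 ->
    #|[set y in [set~ a] | eA x y && (tau x <= tau y)]| <= 1.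
  case/setDP => xX; rewrite inE => xS.
  pose no_earlier u := tau x <= act_time S0_conv u.
  apply: leq_trans (leq_card_nbrs_embed no_earlier f_injX f_indX xX) _.
  by apply: card_later_nbrs_le1 xS; rewrite degH.
have X0 : [set~ a] != set0 by rewrite -card_gt0 cardsC1 cardA -subn1; lia.
have := sum_deg_lt cubicA.1.1 deg_le3 seed_time0 later_le1 X0.
have := sum_deg_setC1 a cubicA.
by rewrite card_setI_imset // cardsC1 cardA -subn1; lia.
Qed.
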